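(* Let $l\ge2$ and $r\ge3$ be integers, $\kappa\in\bigl(1-\frac{2(r-1)}{lr},1-\frac1l\bigr)$, $\lambda>0$, and set $c=r-\frac{2+r}{3-l(1-\kappa)}$ (so $c>0$). There exists $h_0>0$ such that for every $n$, every $\Gamma\in\mathcal B(l,r,n)$ which is a $(\lambda,\kappa)$ expander, every $0<h<h_0$, every choice of signs $h_i\in\{-h,+h\}$, every high-noise-solution $(\underline\eta,\underline{\widehat\eta})$ of the BP equations on $\Gamma$, and every polymer $\gamma\subset\Gamma$ with $|\gamma|<\lambda n$, $$|K(\gamma)|\le h^{\frac c2|\gamma|}.$$
   Context: $n\ge1$ is an integer with $m=nl/r$ an integer. $V$ is a set of $n$ variable nodes and $C$ a set of $m$ check nodes. $\mathcal B(l,r,n)$ is the set of simple bipartite graphs $\Gamma$ (no multiple edges) with vertex classes $V,C$ and edge set $E$, in which every variable node has degree $l$ and every check node has degree $r$. Letters $i,j$ denote variable nodes and $a,b$ check nodes; $\partial i$ and $\partial a$ denote neighbourhoods in $\Gamma$. Expander: for $\lambda,\kappa>0$, $\Gamma$ is a $(\lambda,\kappa)$ expander if every $\mathcal V\subset V$ with $|\mathcal V|<\lambda n$ satisfies $|\partial\mathcal V|\ge\kappa l|\mathcal V|$, where $\partial\mathcal V$ is the set of check nodes adjacent to at least one node of $\mathcal V$. Channel variables: $h>0$ is a parameter, and $h_i\in\{-h,+h\}$ for each $i\in V$. BP equations: real messages $\eta_{i\to a},\widehat\eta_{a\to i}$, one of each for every edge $(i,a)\in E$, satisfying $\eta_{i\to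 a}=h_i+\sum_{b\in\partial i\setminus a}\widehat\eta_{b\to i}$ and $\widehat\eta_{a\to i}=\tanh^{-1}\bigl(\prod_{j\in\partial a\setminus i}\tanh\eta_{j\to a}\bigr)$. A high-noise-solution is a solution such that, for a constant $A_0$ depending only on $l,r$, $|\eta_{i\to a}|\le h+(l-1)h^{r-1}+A_0h^r$ and $|\widehat\eta_{a\to i}|\le h^{r-1}+A_0h^r$ for every edge. Generalized loops and polymers: a generalized loop $g$ is a subgraph of $\Gamma$ (a set of edges of $\Gamma$ together with their endpoints) in which every vertex has induced degree at least $2$; the empty subgraph is allowed. $d_i(g)$, $d_a(g)$ denote induced degrees in $g$. A polymer $\gamma$ is a nonempty connected generalized loop; $|\gamma|$ is its number of vertices. Activities: with $m_i=\tanh\bigl(h_i+\sum_{a\in\partial i}\widehat\eta_{a\to i}\bigr)$, $K(\emptyset)=1$ and $K(g)=\prod_{i\in g\cap V}K_i\prod_{a\in g\cap C}K_a$, where $$K_i=\frac{(1-m_i)^{d_i(g)-1}+(-1)^{d_i(g)}(1+m_i)^{d_i(g)-1}}{2(1-m_i^2)^{d_i(g)-1}},$$ $$K_a=\prod_{i\in\partial a\cap g}\sqrt{\frac{1-\tanh^2\eta_{i\to a}}{1-\prod_{j\in\partial a\setminus i}\tanh^2\eta_{j\to a}}}\;\prod_{i\in\partial a\cap g^c}\tanh\eta_{i\to a}\;\cdot\;\frac{1+(-1)^{d_a(g)}\prod_{i\in\partial a}\tanh^{d_a(g)-1}\eta_{i\to a}}{1+\prod_{i\in\partial a}\tanh\eta_{i\to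 a}}\;\prod_{i\in\partial a\cap g}\sqrt{1-m_i^2},$$ where $\partial a\cap g$ is the set of $i\in\partial a$ with $(i,a)$ an edge of $g$, and $\partial a\cap g^c=\partial a\setminus(\partial a\cap g)$. *)

From Stdlib Require Import Reals.
From mathcomp Require Import all_boot.

Set Implicit Arguments.
Unset Strict Implicit.
Unset Printing Implicit Defensive.

Local Open Scope R_scope.

Definition atanh (x : R) : R := ln ((1 + x) / (1 - x)) / 2.

(* A bipartite graph with variable nodes 'I_n and check nodes 'I_m is given by
   its adjacency relation G i a ("edge (i,a)"); it is automatically simple. *)

Definition in_B (l r n m : nat) (G : 'I_n -> 'I_m -> bool) : Prop :=
  (m * r = n * l)%N /\
  (forall i : 'I_n, #|[set a : 'I_m | G i a]| = l) /\
  (forall a : 'I_m, #|[set i : 'I_n | G i a]| = r).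

Definition nbhd (n m : nat) (G : 'I_n -> 'I_m -> bool) (V : {set 'I_n}) : {set 'I_m} :=
  [set a : 'I_m | [exists i in V, G i a]].

Definition expander (l n m : nat) (G : 'I_n -> 'I_m -> bool) (lam kap : R) : Prop :=
  forall V : {set 'I_n}, INR #|V| < lam * INR n ->
    kap * INR l * INR #|V| <= INR #|nbhd G V|.

(* BP equations; eta i a = eta_{i->a}, etahat i a = widehat eta_{a->i} *)
Definition BP_solution (n m : nat) (G : 'I_n -> 'I_m -> bool) (hs : 'I_n -> R)
    (eta etahat : 'I_n -> 'I_m -> R) : Prop :=
  forall (i : 'I_n) (a : 'I_m), G i a ->
    eta i a = hs i + \big[Rplus/0]_(b : 'I_m | G i b && (b != a)) etahat i b /\
    etahat i a = atanh (\big[Rmult/1]_(j : 'I_n | G j a && (j != i)) tanh (eta j a)).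

Definition high_noise (l r n m : nat) (G : 'I_n -> 'I_m -> bool) (A0 h : R)
    (eta etahat : 'I_n -> 'I_m -> R) : Prop :=
  forall (i : 'I_n) (a : 'I_m), G i a ->
    Rabs (eta i a) <= h + (INR l - 1) * h ^ (r.-1) + A0 * h ^ r /\
    Rabs (etahat i a) <= h ^ (r.-1) + A0 * h ^ r.

(* subgraphs are given by their edge sets *)
Definition degV (n m : nat) (g : {set 'I_n * 'I_m}) (i : 'I_n) : nat :=
  #|[set a : 'I_m | (i, a) \in g]|.
Definition degC (n m : nat) (g : {set 'I_n * 'I_m}) (a : 'I_m) : nat :=
  #|[set i : 'I_n | (i, a) \in g]|.

Definition gen_loop (n m : nat) (G : 'I_n -> 'I_m -> bool) (g : {set 'I_n * 'I_m}) : Prop :=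
  (forall e, e \in g -> G e.1 e.2) /\
  (forall i, (0 < degV g i)%N -> (2 <= degV g i)%N) /\
  (forall a, (0 < degC g a)%N -> (2 <= degC g a)%N).

Definition in_sub (n m : nat) (g : {set 'I_n * 'I_m}) (u : 'I_n + 'I_m) : bool :=
  match u with inl i => (0 < degV g i)%N | inr a => (0 < degC g a)%N end.

Definition sub_adj (n m : nat) (g : {set 'I_n * 'I_m}) : rel ('I_n + 'I_m) :=
  fun u v => match u, v with
             | inl i, inr a => (i, a) \in g
             | inr a, inl i => (i, a) \in g
             | _, _ => false
             end.

Definition polymer (n m : nat) (G : 'I_n -> 'I_m -> bool) (g : {set 'I_n * 'I_m}) : Prop :=
  g != set0 /\ gen_loop G g /\
  (forall u v, in_sub g u -> in_sub g v -> connect (sub_adj g) u v).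

Definition nverts (n m : nat) (g : {set 'I_n * 'I_m}) : nat :=
  (#|[set i : 'I_n | (0 < degV g i)%N]| + #|[set a : 'I_m | (0 < degC g a)%N]|)%N.

Definition mag (n m : nat) (G : 'I_n -> 'I_m -> bool) (hs : 'I_n -> R)
    (etahat : 'I_n -> 'I_m -> R) (i : 'I_n) : R :=
  tanh (hs i + \big[Rplus/0]_(a : 'I_m | G i a) etahat i a).

Definition K_var (n m : nat) (G : 'I_n -> 'I_m -> bool) (hs : 'I_n -> R)
    (etahat : 'I_n -> 'I_m -> R) (g : {set 'I_n * 'I_m}) (i : 'I_n) : R :=
  let d := degV g i in
  let mi := mag G hs etahat i in
  ((1 - mi) ^ (d.-1) + (-1) ^ d * (1 + mi) ^ (d.-1)) / (2 * (1 - mi ^ 2) ^ (d.-1)).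

Definition K_check (n m : nat) (G : 'I_n -> 'I_m -> bool) (hs : 'I_n -> R)
    (eta etahat : 'I_n -> 'I_m -> R) (g : {set 'I_n * 'I_m}) (a : 'I_m) : R :=
  let d := degC g a in
  (\big[Rmult/1]_(i : 'I_n | G i a && ((i, a) \in g))
      sqrt ((1 - tanh (eta i a) ^ 2) /
            (1 - \big[Rmult/1]_(j : 'I_n | G j a && (j != i)) tanh (eta j a) ^ 2))) *
  (\big[Rmult/1]_(i : 'I_n | G i a && ((i, a) \notin g)) tanh (eta i a)) *
  ((1 + (-1) ^ d * \big[Rmult/1]_(i : 'I_n | G i a) tanh (eta i a) ^ (d.-1)) /
   (1 + \big[Rmult/1]_(i : 'I_n | G i a) tanh (eta i a))) *
  (\big[Rmult/1]_(i : 'I_n | G i a && ((i, a) \in g))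
      sqrt (1 - mag G hs etahat i ^ 2)).

Definition K_act (n m : nat) (G : 'I_n -> 'I_m -> bool) (hs : 'I_n -> R)
    (eta etahat : 'I_n -> 'I_m -> R) (g : {set 'I_n * 'I_m}) : R :=
  if g == set0 then 1 else
  (\big[Rmult/1]_(i : 'I_n | (0 < degV g i)%N) K_var G hs etahat g i) *
  (\big[Rmult/1]_(a : 'I_m | (0 < degC g a)%N) K_check G hs eta etahat g a).

From Stdlib Require Import Reals Lra Psatz.
From mathcomp Require Import all_boot zify.

(* They make every message tanh(eta) and every magnetization
   m_i of size O(h), so the activity of a polymer g is a product of one factor
   of size O(1) per vertex and one extra factor O(h) for each edge of Gamma
   that meets a check node of g without belonging to g.  The proof thus splits
   into three independent parts:
   - counting (natural numbers): in a generalized loop every variable node has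
     degree >= 2, and the expansion of Gamma forces many check nodes of g to
     have edges outside g; the number E of such edges is at least c |g|;
   - analysis: each vertex factor of K(g) is bounded, giving
     |K(g)| <= C^|g| (B h)^E for constants C, B depending on l, r, A0;
   - arithmetic: C^|g| (B h)^(c |g|) <= h^(c |g| / 2) once h is small. *)

Set Implicit Arguments.
Unset Strict Implicit.

(* The number of edges of Gamma (of degree r at check nodes) that meet a
   check node of g without belonging to g; each of them contributes a small
   factor tanh(eta) to the activity of g. *)
Definition off_loop_edges (r n m : nat) (g : {set 'I_n * 'I_m}) : nat :=
  \sum_(a | 0 < degC g a) (r - degC g a).

Section GeneralizedLoopCounting.

Variables (l r n m : nat) (G : 'I_n -> 'I_m -> bool) (g : {set 'I_n * 'I_m}).
Hypotheses (HB : in_B l r G) (Hg : gen_loop G g).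

Let Vg := [set i : 'I_n | 0 < degV g i].
Let Cg := [set a : 'I_m | 0 < degC g a].
Let e := \sum_a degC g a.

Lemma sum_degV_degC : \sum_i degV g i = e.
Proof.
rewrite /e /degV /degC.
under eq_bigr => i _ do rewrite -sum1dep_card big_mkcond /=.
under [RHS]eq_bigr => a _ do rewrite -sum1dep_card big_mkcond /=.
by rewrite exchange_big.
Qed.

Lemma degV_le i : degV g i <= l.
Proof.
case: HB => _ [HV _]; rewrite /degV -(HV i); apply: subset_leq_card.
by apply/subsetP => a; rewrite !inE => /(proj1 Hg).
Qed.

Lemma degC_le a : degC g a <= r.
Proof.
case: HB => _ [_ HC]; rewrite /degC -(HC a); apply: subset_leq_card.
by apply/subsetP => i; rewrite !inE => /(proj1 Hg).
Qed.

Lemma two_vars_le_edges : 2 * #|Vg| <= e.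
Proof.
rewrite -sum_degV_degC (bigID (fun i => 0 < degV g i)) /= -sum1dep_card.
rewrite big_distrr /= -[X in X <= _]addn0 leq_add //.
by apply: leq_sum => i Hi; rewrite muln1; apply: (proj1 (proj2 Hg)).
Qed.

(* Let s(a) be the number of edges of Gamma from Vg to a, so that the s(a)
   add up to l |Vg|.  A check node of g receives its d_a <= s(a) edges of g
   from Vg, and a check node of the neighbourhood of Vg outside g has
   s(a) >= 1; hence e + |nbhd Vg| <= l |Vg| + |Cg|. *)
Lemma edges_nbhd_le : e + #|nbhd G Vg| <= l * #|Vg| + #|Cg|.
Proof.
case: HB => _ [HV _]; case: Hg => Hsub _.
pose s a := \sum_(i in Vg) (G i a : nat).
have Hs : \sum_a s a = l * #|Vg|.
  rewrite exchange_big /= -sum1_card big_distrr /=.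
  apply: eq_bigr => i _; rewrite muln1 -(HV i) -sum1dep_card [RHS]big_mkcond /=.
  by apply: eq_bigr => a _; case: (G i a).
rewrite -Hs -!sum1_card [\sum_(a in nbhd _ _) _]big_mkcond [\sum_(a in Cg) _]big_mkcond.
rewrite /e -!big_split /=; apply: leq_sum => a _.
have Hda : degC g a <= s a.
  rewrite /degC -sum1dep_card /s big_mkcond [X in _ <= X]big_mkcond /=.
  apply: leq_sum => i _; case Hia: ((i, a) \in g) => //.
  have -> : i \in Vg by rewrite inE /degV card_gt0; apply/set0Pn; exists a; rewrite inE.
  by move: (Hsub _ Hia) => /= ->.
rewrite [a \in Cg]inE; case: (ltnP 0 (degC g a)) => Hd.
  by rewrite leq_add //; case: (_ \in _).
rewrite addn0; move: Hd; rewrite leqn0 => /eqP ->; rewrite add0n.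
case Hin: (a \in nbhd G Vg) => //; move: Hin; rewrite inE => /existsP [i /andP [Hi Gia]].
by rewrite /s (bigD1 i) //= Gia.
Qed.

Lemma missing_edges : off_loop_edges r g + e = r * #|Cg|.
Proof.
rewrite /off_loop_edges (eq_bigl (fun a => a \in Cg)) => [|a]; last by rewrite inE.
rewrite /e [X in _ + X](bigID (mem Cg)) /= [X in _ + (_ + X)]big1 => [|a]; last first.
  by rewrite !inE -leqNgt leqn0 => /eqP.
rewrite addn0 -big_split /= -sum1_card big_distrr /=.
by apply: eq_bigr => a _; rewrite muln1 subnK // degC_le.
Qed.

Lemma card_in_loop a : #|[set i | G i a && ((i, a) \in g)]| = degC g a.
Proof.
apply: eq_card => i; rewrite !inE; case Hia: ((i, a) \in g); last by rewrite andbF.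
by rewrite (proj1 Hg _ Hia).
Qed.

Lemma card_off_loop a : #|[set i | G i a && ((i, a) \notin g)]| = (r - degC g a)%N.
Proof.
case: HB => _ [_ HC].
have Hin : [set i | G i a] :&: [set i | (i, a) \in g] = [set i | G i a && ((i, a) \in g)].
  by apply/setP => i; rewrite !inE.
have Hout : [set i | G i a] :\: [set i | (i, a) \in g] = [set i | G i a && ((i, a) \notin g)].
  by apply/setP => i; rewrite !inE andbC.
have := cardsID [set i | (i, a) \in g] [set i | G i a].
by rewrite Hin Hout HC card_in_loop => <-; rewrite addKn.
Qed.

Lemma card_other_vars i a : G i a -> #|[set j | G j a && (j != i)]| = r.-1.
Proof.
case: HB => _ [_ HC] Gia.
have := cardsD1 i [set j | G j a]; rewrite HC inE Gia add1n => ->.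
by apply: eq_card => j; rewrite !inE andbC.
Qed.

End GeneralizedLoopCounting.

Local Open Scope R_scope.

(* The real inequality behind the exponent: with s = (2 + r) / (3 - a) >= 1,
   E - (r - s)(v + k) = s (k - e + a v) + (s - 1)(e - 2 v) >= 0. *)
Lemma exponent_bound (a r v k e E : R) :
  1 <= a < 3 -> 0 <= r -> 0 <= v ->
  2 * v <= e -> e <= a * v + k -> E + e = r * k ->
  (r - (2 + r) / (3 - a)) * (v + k) <= E.
Proof.
move=> Ha Hr Hv He Hk HE; set s := (2 + r) / (3 - a).
have Hs : s * (3 - a) = 2 + r by rewrite /s; field; lra.
have Hs1 : 1 <= s by apply: (Rmult_le_reg_r (3 - a)); lra.
have Hid : E - (r - s) * (v + k) = s * (k - e + a * v) + (s - 1) * (e - 2 * v)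
  by nra.
have := Rmult_le_pos s (k - e + a * v) ltac:(lra) ltac:(lra).
have := Rmult_le_pos (s - 1) (e - 2 * v) ltac:(lra) ltac:(lra).
lra.
Qed.

(* The window for kappa: with a = l (1 - kappa), the upper bound on kappa
   gives a > 1 and the lower bound gives a r < 2 (r - 1), hence a < 2 and
   c = r - (2 + r) / (3 - a) > 0. *)
Lemma kappa_window (l r : nat) (kap : R) :
  (2 <= l)%N -> (3 <= r)%N ->
  1 - 2 * (INR r - 1) / (INR l * INR r) < kap -> kap < 1 - 1 / INR l ->
  1 <= INR l * (1 - kap) < 3 /\ 0 < INR r - (2 + INR r) / (3 - INR l * (1 - kap)).
Proof.
move=> /leP Hl /leP Hr Hk1 Hk2; set a := INR l * (1 - kap).
have HlR : 2 <= INR l by have := le_INR _ _ Hl; simpl; lra.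
have HrR : 3 <= INR r by have := le_INR _ _ Hr; simpl; lra.
have Ha1 : 1 < a.
  have : 1 / INR l * INR l < (1 - kap) * INR l by apply: Rmult_lt_compat_r; lra.
  rewrite /a /Rdiv Rmult_1_l Rinv_l; lra.
have Ha2 : a * INR r < 2 * (INR r - 1).
  set t := 2 * (INR r - 1) / (INR l * INR r) in Hk1.
  have Ht : t * (INR l * INR r) = 2 * (INR r - 1) by rewrite /t; field; lra.
  have : (1 - kap) * (INR l * INR r) < t * (INR l * INR r).
    by apply: Rmult_lt_compat_r; [nra | lra].
  rewrite /a; nra.
split; first nra.
have : (2 + INR r) / (3 - a) < INR r; last lra.
apply: (Rmult_lt_reg_r (3 - a)); first nra.
rewrite /Rdiv Rmult_assoc Rinv_l; nra.
Qed.

Lemma off_loop_edges_ge l r n m (G : 'I_n -> 'I_m -> bool) g (lam kap : R) :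
  in_B l r G -> expander l G lam kap -> gen_loop G g ->
  INR (nverts g) < lam * INR n -> 1 <= INR l * (1 - kap) < 3 ->
  (INR r - (2 + INR r) / (3 - INR l * (1 - kap))) * INR (nverts g)
    <= INR (off_loop_edges r g).
Proof.
move=> HB Hexp Hg Hsmall Ha.
set Vg := [set i | (0 < degV g i)%N]; set v := #|Vg|.
set k := #|[set a | (0 < degC g a)%N]|; set e := (\sum_a degC g a)%N.
have Hnv : nverts g = (v + k)%N by [].
have Hv : INR v < lam * INR n.
  by apply: Rle_lt_trans Hsmall; apply: le_INR; apply/leP; rewrite Hnv leq_addr.
have Hex : kap * INR l * INR v <= INR #|nbhd G Vg| := Hexp _ Hv.
have He : (2 * v <= e)%N := two_vars_le_edges Hg.
have Hk : (e + #|nbhd G Vg| <= l * v + k)%N := edges_nbhd_le HB Hg.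
have HE : (off_loop_edges r g + e = r * k)%N := missing_edges HB Hg.
rewrite Hnv plus_INR.
move/leP/le_INR: He; move/leP/le_INR: Hk; move/(f_equal INR): HE.
rewrite !plus_INR !mult_INR /= => HE Hk He.
apply: (exponent_bound (e := INR e)) => //.
- exact: pos_INR.
- exact: pos_INR.
- lra.
- set nb := INR #|nbhd G Vg| in Hex Hk; nra.
Qed.

Lemma abs_div_le (x d q : R) : 0 < d -> Rabs x <= q * d -> Rabs (x / d) <= q.
Proof.
move=> Hd Hx; rewrite /Rdiv Rabs_mult Rabs_inv (Rabs_right d); last lra.
apply: (Rmult_le_reg_r d) => //; rewrite Rmult_assoc Rinv_l; lra.
Qed.

Lemma tanh_small x : Rabs x <= 1/2 -> Rabs (tanh x) <= 2 * Rabs x.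
Proof.
move=> Hx.
have Hu := exp_pos x; have Hw := exp_pos (- x).
have Huw : exp x * exp (- x) = 1 by rewrite -exp_plus Rplus_opp_r exp_0.
have H1 := exp_ineq1_le x; have H2 := exp_ineq1_le (- x).
rewrite /tanh /sinh /cosh.
set u := exp x in Hu Huw H1 *; set w := exp (- x) in Hw Huw H2 *.
replace ((u - w) / 2 / ((u + w) / 2)) with ((u - w) / (u + w)) by (field; lra).
apply: abs_div_le; first lra.
have Hux : u * (1 - x) <= 1 by nra.
have Hwx : w * (1 + x) <= 1 by nra.
move: Hx; rewrite /Rabs; case: Rcase_abs => Hx0; case: Rcase_abs => Hd Hx; nra.
Qed.

Lemma prod_abs_le (I : finType) (P : pred I) (F : I -> R) (f : I -> nat) (C X : R) :
  0 <= C -> 0 <= X -> (forall i, P i -> Rabs (F i) <= C * X ^ f i) ->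
  Rabs (\big[Rmult/1]_(i | P i) F i) <=
    C ^ #|[set i | P i]| * X ^ (\sum_(i | P i) f i)%N.
Proof.
move=> HC HX HF; rewrite -sum1dep_card.
apply: (big_rec3 (fun x (y z : nat) => Rabs x <= C ^ y * X ^ z)).
  by rewrite Rabs_R1 /=; lra.
move=> i y1 y2 y3 Pi IH; rewrite Rabs_mult !pow_add pow_1.
have := Rmult_le_compat _ _ _ _ (Rabs_pos _) (Rabs_pos _) (HF i Pi) IH.
have := pow_le C y2 HC; have := pow_le X y3 HX; have := pow_le X (f i) HX.
nra.
Qed.

Lemma prod_abs_le_card (I : finType) (P : pred I) (F : I -> R) (X : R) :
  0 <= X -> (forall i, P i -> Rabs (F i) <= X) ->
  Rabs (\big[Rmult/1]_(i | P i) F i) <= X ^ #|[set i | P i]|.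
Proof.
move=> HX HF; have := @prod_abs_le I P F (fun _ => 0%N) X 1.
rewrite !pow1 !Rmult_1_r; apply; [lra | lra | exact: HF].
Qed.

Lemma sum_abs_le (I : finType) (P : pred I) (F : I -> R) (q : R) :
  (forall i, P i -> Rabs (F i) <= q) ->
  Rabs (\big[Rplus/0]_(i | P i) F i) <= q * INR #|[set i | P i]|.
Proof.
move=> HF; rewrite -sum1dep_card.
apply: (big_rec2 (fun x (y : nat) => Rabs x <= q * INR y)).
  by rewrite Rabs_R0 /=; lra.
move=> i y1 y2 Pi IH; rewrite add1n S_INR.
have := Rabs_triang (F i) y1; have := HF i Pi; lra.
Qed.

Lemma pow_le_base X k : 0 <= X <= 1 -> (1 <= k)%N -> X ^ k <= X.
Proof.
move=> HX; case: k => [//|k] _ /=.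
have : X ^ k <= 1 by rewrite -(pow1 k); apply: pow_incr.
have := pow_le X k (proj1 HX); nra.
Qed.

(* The variable-node factor of the activity: for |m| <= 1/2 it is at most
   2 ^ (d - 1), since both (1 - m) and (1 + m) lie in [1/2, 3/2]. *)
Lemma K_var_factor_le (mi : R) (d : nat) :
  Rabs mi <= 1/2 ->
  Rabs (((1 - mi) ^ d.-1 + (-1) ^ d * (1 + mi) ^ d.-1) / (2 * (1 - mi ^ 2) ^ d.-1))
   <= 2 ^ d.-1.
Proof.
move=> Hm; set p := d.-1.
have Hm1 : 1/2 <= 1 - mi by move: Hm; rewrite /Rabs; case: Rcase_abs; lra.
have Hm2 : 1/2 <= 1 + mi by move: Hm; rewrite /Rabs; case: Rcase_abs; lra.
have -> : 1 - mi ^ 2 = (1 - mi) * (1 + mi) by ring.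
rewrite Rpow_mult_distr.
set A := (1 - mi) ^ p; set B := (1 + mi) ^ p.
have HA : 1 <= 2 ^ p * A by rewrite /A -Rpow_mult_distr; apply: pow_R1_Rle; lra.
have HB : 1 <= 2 ^ p * B by rewrite /B -Rpow_mult_distr; apply: pow_R1_Rle; lra.
have HA0 : 0 < A by apply: pow_lt; lra.
have HB0 : 0 < B by apply: pow_lt; lra.
have Hnum : Rabs (A + (-1) ^ d * B) <= A + B.
  apply: Rle_trans (Rabs_triang _ _) _.
  by rewrite Rabs_mult pow_1_abs !Rabs_right; lra.
apply: abs_div_le; nra.
Qed.

Lemma sqrt_ratio_le (t P : R) :
  0 <= P <= 1/4 -> Rabs (sqrt ((1 - t ^ 2) / (1 - P))) <= 2.
Proof.
move=> HP; rewrite Rabs_right; last exact/Rle_ge/sqrt_pos.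
rewrite -(sqrt_square 2); last lra.
apply: sqrt_le_1_alt; rewrite /Rdiv.
apply: (Rmult_le_reg_r (1 - P)); first lra.
rewrite Rmult_assoc Rinv_l; last lra.
have := pow2_ge_0 t; nra.
Qed.

Lemma parity_ratio_le (d : nat) (P1 P2 : R) :
  Rabs P1 <= 1 -> Rabs P2 <= 1/2 ->
  Rabs ((1 + (-1) ^ d * P1) / (1 + P2)) <= 4.
Proof.
move=> HP1 HP2.
have Hden : 1/2 <= 1 + P2 by move: HP2; rewrite /Rabs; case: Rcase_abs; lra.
have Hnum : Rabs (1 + (-1) ^ d * P1) <= 2.
  apply: Rle_trans (Rabs_triang _ _) _.
  by rewrite Rabs_R1 Rabs_mult pow_1_abs; lra.
apply: abs_div_le; lra.
Qed.

Lemma sqrt_one_minus_sq_le (x : R) : Rabs (sqrt (1 - x ^ 2)) <= 1.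
Proof.
rewrite Rabs_right; last exact/Rle_ge/sqrt_pos.
rewrite -[X in _ <= X]sqrt_1; apply: sqrt_le_1_alt; have := pow2_ge_0 x; lra.
Qed.

Section CheckFactor.

Variables (l r n m : nat) (G : 'I_n -> 'I_m -> bool) (g : {set 'I_n * 'I_m}).
Variables (hs : 'I_n -> R) (eta etahat : 'I_n -> 'I_m -> R) (a : 'I_m) (X : R).
Hypotheses (HB : in_B l r G) (Hg : gen_loop G g) (Hr : (3 <= r)%N).
Hypotheses (HX : 0 <= X <= 1/2) (Ht : forall i, G i a -> Rabs (tanh (eta i a)) <= X).

(* Each of the at least r - 1 >= 2 other messages into a has |tanh| <= 1/2,
   so their squared product is at most 1/4. *)
Lemma others_sq_prod_le i : G i a ->
  0 <= \big[Rmult/1]_(j | G j a && (j != i)) tanh (eta j a) ^ 2 <= 1/4.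
Proof.
move=> Gia; split.
  by apply: (big_ind (fun x => 0 <= x)) => *; [lra | nra | apply: pow2_ge_0].
apply: Rle_trans (Rle_abs _) _.
apply: Rle_trans (prod_abs_le_card (X := X ^ 2) _ _) _.
- exact: pow2_ge_0.
- move=> j /andP [Gja _]; rewrite -RPow_abs; apply: pow_incr.
  by split; [apply: Rabs_pos | apply: Ht].
rewrite (card_other_vars HB Gia).
apply: Rle_trans (pow_le_base _ _) _; [nra | apply/leP; lia | nra].
Qed.

Lemma K_check_le :
  Rabs (K_check G hs eta etahat g a) <= 2 ^ (r + 2) * X ^ (r - degC g a).
Proof.
have H1 : Rabs (\big[Rmult/1]_(i | G i a && ((i, a) \in g))
            sqrt ((1 - tanh (eta i a) ^ 2) /
                  (1 - \big[Rmult/1]_(j | G j a && (j != i)) tanh (eta j a) ^ 2)))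
          <= 2 ^ r.
  apply: Rle_trans (prod_abs_le_card (X := 2) _ _) _; first lra.
    by move=> i /andP [Gia _]; apply: sqrt_ratio_le; apply: others_sq_prod_le.
  rewrite (card_in_loop Hg); apply: Rle_pow; first lra.
  exact/leP/(degC_le HB Hg).
have H2 : Rabs (\big[Rmult/1]_(i | G i a && ((i, a) \notin g)) tanh (eta i a))
          <= X ^ (r - degC g a).
  rewrite -(card_off_loop HB Hg); apply: prod_abs_le_card; first lra.
  by move=> i /andP [Gia _]; apply: Ht.
have H3 : Rabs ((1 + (-1) ^ degC g a *
                   \big[Rmult/1]_(i | G i a) tanh (eta i a) ^ (degC g a).-1) /
                (1 + \big[Rmult/1]_(i | G i a) tanh (eta i a))) <= 4.
  apply: parity_ratio_le.
    apply: Rle_trans (prod_abs_le_card (X := 1) _ _) _; [lra | move=> i Gia | by rewrite pow1; lra].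
    rewrite -RPow_abs -(pow1 (degC g a).-1); apply: pow_incr.
    by split; [apply: Rabs_pos | have := Ht Gia; lra].
  apply: Rle_trans (prod_abs_le_card _ Ht) _; first lra.
  case: HB => _ [_ HC]; rewrite HC.
  apply: Rle_trans (pow_le_base _ _) _; [lra | apply/leP; lia | lra].
have H4 : Rabs (\big[Rmult/1]_(i | G i a && ((i, a) \in g))
                 sqrt (1 - mag G hs etahat i ^ 2)) <= 1.
  apply: Rle_trans (prod_abs_le_card (X := 1) _ _) _; [lra | | by rewrite pow1; lra].
  by move=> i _; apply: sqrt_one_minus_sq_le.
rewrite /K_check 3!Rabs_mult.
have H12 := Rmult_le_compat _ _ _ _ (Rabs_pos _) (Rabs_pos _) H1 H2.
have H123 := Rmult_le_compat _ _ _ _ (Rmult_le_pos _ _ (Rabs_pos _) (Rabs_pos _))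
               (Rabs_pos _) H12 H3.
apply: Rle_trans (Rmult_le_compat _ _ _ _ _ (Rabs_pos _) H123 H4) _.
  by apply: Rmult_le_pos; [apply: Rmult_le_pos|]; apply: Rabs_pos.
rewrite pow_add; lra.
Qed.

End CheckFactor.

Lemma K_act_le l r n m (G : 'I_n -> 'I_m -> bool) g hs eta etahat (X : R) :
  in_B l r G -> gen_loop G g -> g != set0 -> (3 <= r)%N -> 0 <= X <= 1/2 ->
  (forall i a, G i a -> Rabs (tanh (eta i a)) <= X) ->
  (forall i, Rabs (mag G hs etahat i) <= 1/2) ->
  Rabs (K_act G hs eta etahat g) <=
    (2 ^ (l + r + 2)) ^ nverts g * X ^ off_loop_edges r g.
Proof.
move=> HB Hg Hne Hr HX Ht Hm; set C := 2 ^ (l + r + 2).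
have HC : 1 <= C by apply: pow_R1_Rle; lra.
have HXE := pow_le X (off_loop_edges r g) (proj1 HX).
rewrite /K_act (negbTE Hne).
have Hvar : Rabs (\big[Rmult/1]_(i | (0 < degV g i)%N) K_var G hs etahat g i)
            <= C ^ #|[set i | (0 < degV g i)%N]|.
  apply: prod_abs_le_card => [|i _]; first lra.
  apply: Rle_trans (K_var_factor_le _ (Hm i)) _; apply: Rle_pow; first lra.
  by apply/leP; have := degV_le HB Hg i; lia.
have Hcheck : Rabs (\big[Rmult/1]_(a | (0 < degC g a)%N) K_check G hs eta etahat g a)
              <= C ^ #|[set a | (0 < degC g a)%N]| * X ^ off_loop_edges r g.
  apply: prod_abs_le => [||a _]; [lra | lra |].
  apply: Rle_trans (K_check_le hs etahat HB Hg Hr HX (Ht^~ a)) _.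
  apply: Rmult_le_compat_r; first exact: pow_le (proj1 HX).
  by apply: Rle_pow; [lra | apply/leP; lia].
rewrite Rabs_mult /nverts pow_add Rmult_assoc.
by apply: Rmult_le_compat => //; apply: Rabs_pos.
Qed.

Lemma high_noise_small l r n m (G : 'I_n -> 'I_m -> bool) (A0 h B : R) hs eta etahat :
  in_B l r G -> (2 <= r)%N -> 0 < h ->
  (1 + INR l) * (1 + Rabs A0) <= B -> B * h <= 1/4 ->
  (forall i, Rabs (hs i) <= h) -> high_noise l r G A0 h eta etahat ->
  (forall i a, G i a -> Rabs (tanh (eta i a)) <= 2 * B * h) /\
  (forall i, Rabs (mag G hs etahat i) <= 2 * B * h).
Proof.
move=> [_ [HV _]] Hr Hh HB HBh Hhs Hnoise.
have HlR := pos_INR l; have HA0 := Rabs_pos A0.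
have HlA : 0 <= INR l * Rabs A0 by apply: Rmult_le_pos.
have Hh1 : h <= 1 by have := Rmult_le_compat_r h 1 B ltac:(lra) ltac:(nra); lra.
have Hpow k : (1 <= k)%N -> 0 <= h ^ k <= h.
  by move=> Hk; split; [apply: pow_le; lra | apply: pow_le_base => //; lra].
have [Hr1 Hr1'] := Hpow r.-1 ltac:(lia).
have [Hr0 Hr0'] := Hpow r ltac:(lia).
have HA0h : A0 * h ^ r <= Rabs A0 * h.
  by have := Rle_abs A0; have := Rmult_le_compat_l _ _ _ HA0 Hr0'; nra.
have Heta i a : G i a -> Rabs (eta i a) <= B * h.
  move=> /Hnoise [Hi _].
  have := Rmult_le_compat_l _ _ _ HlR Hr1'.
  have := Rmult_le_compat_r _ _ _ (Rlt_le _ _ Hh) HB.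
  nra.
have Hetahat i a : G i a -> Rabs (etahat i a) <= (1 + Rabs A0) * h.
  by move=> /Hnoise [_ Hi]; lra.
split=> [i a Gia | i].
  by apply: Rle_trans (tanh_small _) _; have := Heta i a Gia; nra.
have Hsum : Rabs (\big[Rplus/0]_(a | G i a) etahat i a) <= (1 + Rabs A0) * h * INR l.
  by rewrite -(HV i); apply: sum_abs_le; apply: Hetahat.
have Harg : Rabs (hs i + \big[Rplus/0]_(a | G i a) etahat i a) <= B * h.
  by apply: Rle_trans (Rabs_triang _ _) _; have := Hhs i; nra.
rewrite /mag; apply: Rle_trans (tanh_small (Rle_trans _ _ _ Harg _)) _; first lra.
by rewrite Rmult_assoc; apply: Rmult_le_compat_l Harg; lra.
Qed.

(* Final trade-off: a bound C^N (beta h)^E with E >= c N becomes h^(c N / 2)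
   as soon as C beta^c h^(c/2) <= 1, i.e. half of the decay pays for the
   constants. *)
Lemma power_decay (C beta h c N E : R) :
  0 < C -> 0 < beta -> 0 < h -> beta * h < 1 -> 0 < c -> 0 <= N -> c * N <= E ->
  C * Rpower beta c * Rpower h (c / 2) <= 1 ->
  Rpower C N * Rpower (beta * h) E <= Rpower h (c / 2 * N).
Proof.
move=> HC Hb Hh Hbh Hc HN HE Hsmall; set x := beta * h.
have Hx : 0 < x by apply: Rmult_lt_0_compat.
have Hdecay : Rpower x E <= Rpower x (c * N).
  have Hln : ln x < 0 by rewrite -ln_1; apply: ln_increasing.
  rewrite /Rpower; case: (Rle_lt_or_eq_dec _ _ HE) => [Hlt | ->]; last lra.
  by left; apply: exp_increasing; nra.
have Hhalf := exp_pos (c / 2 * ln h).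
have Hbase : C * Rpower x c <= Rpower h (c / 2).
  rewrite -Rpower_mult_distr // -[in Rpower h c](Rplus_half_diag c) Rpower_plus.
  by have := Rmult_le_compat_r _ _ _ (Rlt_le _ _ Hhalf) Hsmall; rewrite /Rpower; nra.
have Hsplit : Rpower C N * Rpower x (c * N) = Rpower (C * Rpower x c) N.
  by rewrite -Rpower_mult Rpower_mult_distr //; apply: exp_pos.
apply: (Rle_trans _ (Rpower C N * Rpower x (c * N))).
  by apply: Rmult_le_compat_l => //; apply/Rlt_le/exp_pos.
rewrite Hsplit -Rpower_mult; apply: Rle_Rpower_l => //; split => //.
by apply: Rmult_lt_0_compat => //; apply: exp_pos.
Qed.

Lemma small_h_threshold (D c h : R) :
  0 < D -> 0 < c -> 0 < h -> h <= Rpower D (- 2 / c) -> D * Rpower h (c / 2) <= 1.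
Proof.
move=> HD Hc Hh Hthr.
have : Rpower h (c / 2) <= Rpower (Rpower D (- 2 / c)) (c / 2).
  by apply: Rle_Rpower_l; lra.
rewrite Rpower_mult (_ : - 2 / c * (c / 2) = - 1); last by field; lra.
rewrite Rpower_Ropp Rpower_1 // => H.
by have := Rmult_le_compat_l _ _ _ (Rlt_le _ _ HD) H; rewrite Rinv_r; lra.
Qed.

Theorem mainTheorem8 (l r : nat) (kap lam A0 : R) :
  (2 <= l)%N -> (3 <= r)%N ->
  1 - 2 * (INR r - 1) / (INR l * INR r) < kap -> kap < 1 - 1 / INR l ->
  0 < lam ->
  let c := INR r - (2 + INR r) / (3 - INR l * (1 - kap)) in
  exists h0 : R, 0 < h0 /\
    forall (n m : nat) (G : 'I_n -> 'I_m -> bool),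
      in_B l r G -> expander l G lam kap ->
      forall (h : R), 0 < h -> h < h0 ->
      forall (hs : 'I_n -> R), (forall i, hs i = h \/ hs i = - h) ->
      forall (eta etahat : 'I_n -> 'I_m -> R),
        BP_solution G hs eta etahat -> high_noise l r G A0 h eta etahat ->
      forall (g : {set 'I_n * 'I_m}),
        polymer G g -> INR (nverts g) < lam * INR n ->
        Rabs (K_act G hs eta etahat g) <= Rpower h (c / 2 * INR (nverts g)).
Proof.
move=> Hl Hr Hk1 Hk2 _ c; have [Ha Hc] := kappa_window Hl Hr Hk1 Hk2.
set B := (1 + INR l) * (1 + Rabs A0).
have HB : 1 <= B by have := pos_INR l; have := Rabs_pos A0; rewrite /B; nra.
set C := 2 ^ (l + r + 2); have HC : 1 <= C by apply: pow_R1_Rle; lra.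
set D := C * Rpower (2 * B) c.
have HD : 0 < D by apply: Rmult_lt_0_compat; [lra | apply: exp_pos].
exists (Rmin (/ (4 * B)) (Rpower D (- 2 / c))); split.
  by apply: Rmin_glb_lt; [apply: Rinv_0_lt_compat; lra | apply: exp_pos].
move=> n m G HBG Hexp h Hh Hh0 hs Hhs eta etahat _ Hnoise g [Hne [Hg _]] Hsmall.
have HBh : B * h <= 1/4.
  have := Rmin_l (/ (4 * B)) (Rpower D (- 2 / c)).
  by have := Rmult_lt_compat_l (4 * B) h (/ (4 * B)) ltac:(lra); rewrite Rinv_r; lra.
have Hthr : h <= Rpower D (- 2 / c) by have := Rmin_r (/ (4 * B)) (Rpower D (- 2 / c)); lra.
have Hhs_abs i : Rabs (hs i) <= h by case: (Hhs i) => ->; rewrite ?Rabs_Ropp Rabs_right; lra.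
have [Ht Hm] := high_noise_small HBG (leqW Hr) Hh (Rle_refl B) HBh Hhs_abs Hnoise.
have HX : 0 <= 2 * B * h <= 1/2 by nra.
have HK := K_act_le HBG Hg Hne Hr HX Ht (fun i => Rle_trans _ _ _ (Hm i) (proj2 HX)).
have Hexponent := off_loop_edges_ge HBG Hexp Hg Hsmall Ha.
apply: Rle_trans HK _.
have HX0 : 0 < 2 * B * h by nra.
rewrite -(Rpower_pow _ _ HX0) -(Rpower_pow _ C); last lra.
apply: power_decay => //; [lra | lra | nra | exact: pos_INR | exact: small_h_threshold].
Qed.
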